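(* For every subdirectly irreducible state-morphism algebra $(\mathbf A,\tau)$ there is a subdirectly irreducible algebra $\mathbf B$ of the same type as $\mathbf A$ such that $(\mathbf A,\tau)$ is $\mathbf B$-subdiagonal, i.e. $(\mathbf A,\tau)$ embeds into $D(\mathbf B)=(\mathbf B\times\mathbf B,\tau_B)$.
   Context: Let $F$ be an arbitrary algebraic type. A state-morphism on an algebra $\mathbf A$ of type $F$ is an endomorphism $\tau:\mathbf A\to\mathbf A$ with $\tau\circ\tau=\tau$; $(\mathbf A,\tau)$, viewed as an algebra of type $F$ extended by the unary operation $\tau$, is a state-morphism algebra, and subdirect irreducibility of $(\mathbf A,\tau)$ refers to this extended algebra. For an algebra $\mathbf B$ of type $F$, $D(\mathbf B)=(\mathbf B\times\mathbf B,\tau_B)$ with $\tau_B(x,y)=(x,x)$ is the diagonal state-morphism algebra; an embedding of state-morphism algebras is an injective homomorphism of type $F$ commuting with the unary operations. *)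

From mathcomp Require Import all_boot.
Set Implicit Arguments. Unset Strict Implicit. Unset Printing Implicit Defensive.

Record signature := Signature { sym : Type; arity : sym -> nat }.

Record algebra (F : signature) := Algebra {
  carrier :> Type;
  op : forall f : sym F, ('I_(arity f) -> carrier) -> carrier }.

Definition is_hom (F : signature) (A B : algebra F) (h : A -> B) : Prop :=
  forall (f : sym F) (args : 'I_(arity f) -> A),
    h (op args) = op (fun i => h (args i)).

Definition is_congruence (F : signature) (A : algebra F) (th : A -> A -> Prop) : Prop :=
  [/\ (forall x, th x x), (forall x y, th x y -> th y x),
      (forall x y z, th x y -> th y z -> th x z) &
      (forall (f : sym F) (a b : 'I_(arity f) -> A),
          (forall i, th (a i) (b i)) -> th (op a) (op b))].

(* Subdirectly irreducible: the intersection of all congruences different from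
   the identity congruence is different from the identity congruence
   (this also forces |A| >= 2). *)
Definition subdirectly_irreducible (F : signature) (A : algebra F) : Prop :=
  exists a b : A, a <> b /\
    forall th, is_congruence th -> (exists x y, x <> y /\ th x y) -> th a b.

Definition state_morphism (F : signature) (A : algebra F) (tau : A -> A) : Prop :=
  @is_hom F A A tau /\ (forall x, tau (tau x) = tau x).

Definition ext_sig (F : signature) : signature :=
  @Signature (option (sym F))
    (fun o => match o with Some f => arity f | None => 1 end).

Definition sm_algebra (F : signature) (A : algebra F) (tau : A -> A)
  : algebra (ext_sig F) :=
  @Algebra (ext_sig F) A
    (fun o => match o as o0 return ('I_(arity (s := ext_sig F) o0) -> A) -> A with
              | Some f => fun args => @op F A f args
              | None => fun args => tau (args ord0)
              end).

Definition prod_algebra (F : signature) (B : algebra F) : algebra F :=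
  @Algebra F (B * B)%type
    (fun f args => (op (fun i => (args i).1), op (fun i => (args i).2))).

Definition diag_tau (F : signature) (B : algebra F) (p : (B * B)%type) : (B * B)%type :=
  (p.1, p.1).

Definition subdiagonal (F : signature) (A : algebra F) (tau : A -> A) (B : algebra F) : Prop :=
  exists h : A -> prod_algebra B,
    [/\ injective h, @is_hom F A (prod_algebra B) h &
        forall x, h (tau x) = diag_tau (h x)].

From mathcomp Require Import all_boot.
From mathcomp Require Import boolp classical_sets.
Set Implicit Arguments. Unset Strict Implicit.

(** Let [(a, b)] generate the monolith of [(A, tau)].  By Zorn's lemma there is a
   congruence [phi] of [A] maximal among those not identifying [a] and [b]; then
   [(phi a, phi b)] generates the monolith of [A/phi], so [B := A/phi] is
   subdirectly irreducible.  The map [x |-> (phi (tau x), phi x)] into [D(B)] is a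
   homomorphism of state-morphism algebras; its kernel does not identify [a] and
   [b], so it is the identity congruence of [(A, tau)], i.e. the map is an
   embedding. *)

Lemma eq_congruence (F : signature) (A : algebra F) : is_congruence (@eq A).
Proof.
by split=> // [x y z -> | f u v uv]; last by congr op; apply: funext.
Qed.

Section Congruences.
Variables (F : signature) (A : algebra F).

Lemma preimage_congruence (B : algebra F) (h : A -> B) (th : B -> B -> Prop) :
  is_hom h -> is_congruence th -> is_congruence (fun x y => th (h x) (h y)).
Proof.
move=> hom [rf sy tr cc]; split=> [x|x y|x y z|f u v uv]; [exact: rf|exact: sy|exact: tr|].
by rewrite !hom; apply: cc.
Qed.

Lemma kernel_congruence (B : algebra F) (h : A -> B) :
  is_hom h -> is_congruence (fun x y => h x = h y).
Proof. by move/preimage_congruence; apply; apply: eq_congruence. Qed.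

Definition maximal_congruence_avoiding (phi : A -> A -> Prop) (a b : A) :=
  [/\ is_congruence phi, ~ phi a b &
      forall psi, is_congruence psi -> ~ psi a b ->
        (forall x y, phi x y -> psi x y) -> forall x y, psi x y -> phi x y].

Section Chain.
Variable C : (A -> A -> Prop) -> Prop.
Hypothesis C_total : forall c d, C c -> C d ->
  (forall x y, c x y -> d x y) \/ (forall x y, d x y -> c x y).
Hypothesis C_refl : forall c, C c -> forall x, c x x.

Lemma chain_finite_bound n (u v : 'I_n -> A) (s : seq 'I_n) :
  (forall i, u i = v i \/ exists2 c, C c & c (u i) (v i)) ->
  (forall i, i \in s -> u i = v i) \/
  exists2 c, C c & forall i, i \in s -> c (u i) (v i).
Proof.
move=> uv; elim: s => [|j s IH]; first by left.
have in_cons (P : 'I_n -> Prop) : P j -> (forall i, i \in s -> P i) ->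
    forall i, i \in j :: s -> P i.
  by move=> Pj Ps i; rewrite inE => /orP[/eqP->|/Ps].
case: IH => [eq_s|[c Cc cs]]; case: (uv j) => [eq_j|[d Cd dj]].
- by left; apply: in_cons.
- by right; exists d => //; apply: in_cons => // i /eq_s->; apply: C_refl.
- by right; exists c => //; apply: in_cons; rewrite // eq_j; apply: C_refl.
- have [cd|dc] := C_total Cc Cd.
  + by right; exists d => //; apply: in_cons => // i /cs; apply: cd.
  + by right; exists c => //; apply: in_cons => //; apply: dc.
Qed.

Hypothesis C_congruence : forall c, C c -> is_congruence c.

(* The chain may be empty, hence the explicit diagonal. *)
Lemma chain_union_congruence :
  is_congruence (fun x y => x = y \/ exists2 c, C c & c x y).
Proof.
split=> [x|x y|x y z|f u v uv]; first by left.
- case=> [->|[c Cc cxy]]; first by left.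
  by right; exists c => //; case: (C_congruence Cc) => _ sy _ _; apply: sy.
- case=> [->//|[c Cc cxy]] [<-|[d Cd dyz]]; first by right; exists c.
  right; have [cd|dc] := C_total Cc Cd.
  + by exists d => //; case: (C_congruence Cd) => _ _ tr _; apply: tr dyz; apply: cd.
  + by exists c => //; case: (C_congruence Cc) => _ _ tr _; apply: tr cxy _; apply: dc.
- have [eq_all|[c Cc c_all]] := chain_finite_bound (enum 'I_(arity f)) uv.
  + by left; congr op; apply: funext => i; apply: eq_all; rewrite mem_enum.
  + right; exists c => //; case: (C_congruence Cc) => _ _ _ cc.
    by apply: cc => i; apply: c_all; rewrite mem_enum.
Qed.

End Chain.

Lemma ex_maximal_congruence_avoiding (a b : A) : a <> b ->
  exists phi, maximal_congruence_avoiding phi a b.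
Proof.
move=> nab.
pose S := {R : A -> A -> Prop | is_congruence R /\ ~ R a b}.
pose le (s t : S) := `[< forall x y, sval s x y -> sval t x y >].
have [||| t t_max] := @ZL_preorder S (exist _ _ (conj (eq_congruence A) nab)) le.
- by move=> s; apply/asboolP.
- by move=> r s t /asboolP rs /asboolP st; apply/asboolP => x y /rs/st.
- move=> C C_total.
  pose C' c := exists2 s, C s & c = sval s.
  have C'_congruence c : C' c -> is_congruence c by case=> s _ ->; case: (svalP s).
  have C'_total c d : C' c -> C' d ->
      (forall x y, c x y -> d x y) \/ (forall x y, d x y -> c x y).
    by case=> s Cs ->; case=> s' Cs' ->; case: (C_total s s' Cs Cs') => /asboolP; [left|right].
  have C'_refl c : C' c -> forall x, c x x by move/C'_congruence; case.
  pose U x y := x = y \/ exists2 c, C' c & c x y.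
  have U_avoid : ~ U a b by case=> [//|[_ [s _ ->]]]; case: (svalP s).
  exists (exist _ U (conj (chain_union_congruence C'_total C'_refl C'_congruence) U_avoid)).
  by move=> s Cs; apply/asboolP => x y sxy; right; exists (sval s) => //; exists s.
- case: t t_max => phi [phi_cong phi_avoid] t_max; exists phi.
  split=> // psi psi_cong psi_avoid phi_psi.
  by apply/asboolP; apply: (t_max (exist _ psi (conj psi_cong psi_avoid))); apply/asboolP.
Qed.

End Congruences.

Section Quotient.
Variables (F : signature) (A : algebra F) (phi : A -> A -> Prop).
Hypothesis phi_cong : is_congruence phi.

Definition quotient_carrier := {P : A -> Prop | exists x, P = phi x}.

Definition cl (x : A) : quotient_carrier := exist _ (phi x) (ex_intro _ x erefl).

Definition rep (p : quotient_carrier) : A := sval (cid (svalP p)).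

Lemma eq_cl x y : cl x = cl y <-> phi x y.
Proof.
case: phi_cong => rf sy tr _; split=> [/(congr1 sval) /= ->|phi_xy]; first exact: rf.
rewrite /cl; apply: eq_exist; apply: funext => z; apply: propext.
by split=> [?|?]; [apply: tr (sy _ _ phi_xy) _|apply: tr phi_xy _].
Qed.

Lemma repK : cancel rep cl.
Proof. by case=> P P_class; rewrite /cl /rep /=; case: cid => x /= P_x; apply: eq_exist. Qed.

Definition quotient_algebra : algebra F :=
  @Algebra F quotient_carrier (fun f args => cl (op (fun i => rep (args i)))).

Lemma cl_hom : @is_hom F A quotient_algebra cl.
Proof.
move=> f args; apply/eq_cl; case: phi_cong => _ sy _ cc.
by apply: cc => i; apply: sy; apply/eq_cl; rewrite repK.
Qed.

Lemma quotient_subdirectly_irreducible (a b : A) :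
  maximal_congruence_avoiding phi a b -> subdirectly_irreducible quotient_algebra.
Proof.
case=> _ phi_avoid phi_max; exists (cl a), (cl b); split=> [/eq_cl//|th th_cong [p [q [pq th_pq]]]].
pose psi x y := th (cl x) (cl y).
have psi_cong : is_congruence psi by apply: preimage_congruence th_cong; apply: cl_hom.
have phi_psi x y : phi x y -> psi x y by move/eq_cl; rewrite /psi => ->; case: th_cong.
apply: contrapT => psi_avoid; apply: pq; rewrite -[p]repK -[q]repK; apply/eq_cl.
by apply: (phi_max _ psi_cong psi_avoid phi_psi); rewrite /psi !repK.
Qed.

End Quotient.

Lemma sm_hom (F : signature) (A B : algebra F) (tauA : A -> A) (tauB : B -> B) (h : A -> B) :
  is_hom h -> (forall x, h (tauA x) = tauB (h x)) ->
  @is_hom (ext_sig F) (sm_algebra tauA) (sm_algebra tauB) h.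
Proof. by move=> hom h_tau [f|] args /=; [apply: hom|apply: h_tau]. Qed.

Theorem theorem3p7 (F : signature) (A : algebra F) (tau : A -> A) :
  @state_morphism F A tau ->
  subdirectly_irreducible (@sm_algebra F A tau) ->
  exists B : algebra F, @subdirectly_irreducible F B /\ @subdiagonal F A tau B.
Proof.
move=> [tau_hom tau_idem] [a [b [nab monolith]]].
have [phi phi_max] := @ex_maximal_congruence_avoiding F A a b nab.
have [phi_cong phi_avoid _] := phi_max.
exists (quotient_algebra phi); split; first exact: quotient_subdirectly_irreducible phi_max.
pose h x : prod_algebra (quotient_algebra phi) := (cl phi (tau x), cl phi x).
have h_hom : is_hom h by move=> f args; rewrite /h tau_hom !(cl_hom phi_cong).
have h_tau x : h (tau x) = diag_tau (h x) by rewrite /h /diag_tau /= tau_idem.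
exists h; split=> // x y hxy; apply: contrapT => nxy.
have h_ab : h a = h b.
  apply: (monolith _ (kernel_congruence (sm_hom h_hom h_tau))).
  by exists x, y.
by apply/phi_avoid/(eq_cl phi_cong); apply: (congr1 snd h_ab).
Qed.
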